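(* In the standing setup with a single fluid, and with $t_{\mathrm b},\xi_{\mathrm b},\xi_0,t_0$ as in the time-interval setup, the duration $\Delta t_{\mathrm b0}=t_0-t_{\mathrm b}$ satisfies $$\Delta t_{\mathrm b0}\ \ge\ \frac{1}{2\sqrt{2\xi_0}}\,\frac{1}{c\,l}\,(\xi_0-\xi_{\mathrm b}).$$
   Context: Standing setup. Fix real constants $c>0$ and $l>0$, a nonempty finite index set $A$, and constants $w_\alpha\in[-1,1]$ for $\alpha\in A$. Let $I\subseteq\mathbb{R}$ be an interval and let $x,y_{\mathrm r},y_{\mathrm i},h,z_\alpha$ ($\alpha\in A$) be real $C^1$ functions of $t\in I$ with $h>0$ and $z_\alpha\ge 0$. Define $\xi(t)=x(t)^2+\sum_{\beta\in A}\frac{1+w_\beta}{2}z_\beta(t)^2$. Assume that on $I$: $\dot x=\big[-x+4c\,y_{\mathrm r}y_{\mathrm i}+x\,\xi\big]h$, $\dot y_{\mathrm r}=\big[\xi\,y_{\mathrm r}-c\,x\,y_{\mathrm i}\big]h$, $\dot y_{\mathrm i}=\big[\xi\,y_{\mathrm i}+c\,x\,y_{\mathrm r}\big]h$, $\dot z_\alpha=\big[-\tfrac{1+w_\alpha}{2}+\xi\big]z_\alpha h$, $\dot h=-\xi h^2$, together with the constraints $x^2+4y_{\mathrm r}^2+\sum_{\beta\in A}z_\beta^2=1$ and $y_{\mathrm r}^2+y_{\mathrm i}^2=\frac{l^2}{2h^2}$. Single fluid: $A$ has exactly one element; write $z$ and $w$ for $z_\alpha$ and $w_\alpha$. Time-interval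 setup: let $t_{\mathrm b}\in I$, $\xi_{\mathrm b}:=\xi(t_{\mathrm b})$, and let $\xi_0$ be a real number with $\xi_0>0$ and $\xi_{\mathrm b}\le\xi_0\le\frac{1+w}{2}$. Assume the set $\{t\in I:\ t\ge t_{\mathrm b},\ \xi(t)=\xi_0\}$ is nonempty and let $t_0$ be its minimum (so $\xi(t)\le\xi_0$ for all $t\in[t_{\mathrm b},t_0]$); put $\Delta t_{\mathrm b0}=t_0-t_{\mathrm b}$. *)

From Stdlib Require Export Reals.
Open Scope R_scope.

Definition is_interval (I : R -> Prop) : Prop :=
  forall a b c, I a -> I c -> a <= b -> b <= c -> I b.

(* f has derivative d at t relative to I (one-sided at endpoints of I). *)
Definition deriv_within (I : R -> Prop) (f : R -> R) (t d : R) : Prop :=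
  forall eps, 0 < eps -> exists delta, 0 < delta /\
    forall s, I s -> s <> t -> Rabs (s - t) < delta ->
      Rabs ((f s - f t) / (s - t) - d) < eps.

Definition cont_within (I : R -> Prop) (g : R -> R) (t : R) : Prop :=
  forall eps, 0 < eps -> exists delta, 0 < delta /\
    forall s, I s -> Rabs (s - t) < delta -> Rabs (g s - g t) < eps.

Definition C1_on (I : R -> Prop) (f : R -> R) : Prop :=
  exists f' : R -> R,
    (forall t, I t -> deriv_within I f t (f' t)) /\
    (forall t, I t -> cont_within I f' t).

(* The function ξ = x^2 + k z^2 (k = (1+w)/2) obeys
   ξ' = 8 c h x y_r y_i + 2 h (ξ^2 - x^2 - k^2 z^2).
   The second term is nonpositive because x^2 + z^2 <= 1, and on [t_b, t_0], where ξ <= ξ_0,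
   the constraints give x^2 <= ξ_0, y_r^2 <= 1/4 and (h y_i)^2 <= l^2/2, so ξ' <= 2 c l sqrt(2 ξ_0).
   The mean value theorem then bounds the time ξ needs to climb from ξ_b to ξ_0. *)
From Stdlib Require Import Reals Lra Psatz.
From Coquelicot Require Import Coquelicot.
Open Scope R_scope.

Lemma deriv_within_cont I f t d : deriv_within I f t d -> cont_within I f t.
Proof.
  intros Hd eps Heps.
  destruct (Hd 1 Rlt_0_1) as [del [Hdel Hs]].
  assert (Ha : 0 < Rabs d + 1) by (pose proof (Rabs_pos d); lra).
  exists (Rmin del (eps / (Rabs d + 1))). split.
  { apply Rmin_pos; [lra | apply Rdiv_lt_0_compat; lra]. }
  intros s Is Hst.
  destruct (Req_dec s t) as [-> | Hne].
  { replace (f t - f t) with 0 by ring. rewrite Rabs_R0; lra. }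
  pose proof (Hs s Is Hne (Rlt_le_trans _ _ _ Hst (Rmin_l _ _))) as Hq.
  pose proof (Rlt_le_trans _ _ _ Hst (Rmin_r _ _)) as Hst'.
  set (q := (f s - f t) / (s - t)) in *.
  assert (Hfq : f s - f t = q * (s - t)) by (unfold q; field; lra).
  rewrite Hfq, Rabs_mult.
  assert (Hqd : Rabs q < Rabs d + 1).
  { pose proof (Rabs_triang (q - d) d). replace (q - d + d) with q in H by ring. lra. }
  assert (Hsmall : Rabs (s - t) * (Rabs d + 1) < eps).
  { apply (Rmult_lt_compat_r (Rabs d + 1)) in Hst'; [| lra].
    replace (eps / (Rabs d + 1) * (Rabs d + 1)) with eps in Hst' by (field; lra). exact Hst'. }
  pose proof (Rabs_pos q). pose proof (Rabs_pos (s - t)). nra.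
Qed.

Lemma deriv_within_derivable_pt_lim I f a b s d :
  a < s < b -> (forall u, a < u < b -> I u) ->
  deriv_within I f s d -> derivable_pt_lim f s d.
Proof.
  intros Hs HI Hd eps Heps.
  destruct (Hd eps Heps) as [del [Hdel Hfs]].
  set (r := Rmin del (Rmin (s - a) (b - s))).
  assert (Hr : 0 < r) by (apply Rmin_pos; [lra | apply Rmin_pos; lra]).
  exists (mkposreal _ Hr). simpl. intros hh Hh Hhr.
  assert (Hr1 := Rmin_l del (Rmin (s - a) (b - s))).
  assert (Hr2 := Rmin_r del (Rmin (s - a) (b - s))).
  pose proof (Rmin_l (s - a) (b - s)). pose proof (Rmin_r (s - a) (b - s)).
  fold r in Hr1, Hr2.
  pose proof (Rle_abs hh). pose proof (Rle_abs (- hh)). rewrite Rabs_Ropp in *.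
  replace hh with (s + hh - s) at 2 by ring.
  apply Hfs.
  - apply HI. lra.
  - lra.
  - replace (s + hh - s) with hh by ring. lra.
Qed.

(* Clamping to [a, b] turns a function continuous relative to [a, b] into one continuous on R,
   as the mean value and intermediate value theorems below require. *)
Definition clamp a b t := Rmax a (Rmin t b).

Lemma clamp_mem a b t : a <= b -> a <= clamp a b t <= b.
Proof. intros. unfold clamp, Rmax, Rmin. repeat destruct Rle_dec; lra. Qed.

Lemma clamp_id a b t : a <= t <= b -> clamp a b t = t.
Proof. intros. unfold clamp, Rmax, Rmin. repeat destruct Rle_dec; lra. Qed.

Lemma clamp_dist a b u v : a <= b -> Rabs (clamp a b u - clamp a b v) <= Rabs (u - v).
Proof.
  intros. unfold clamp, Rmax, Rmin.
  repeat destruct Rle_dec; unfold Rabs; repeat destruct Rcase_abs; lra.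
Qed.

Lemma continuity_pt_clamp I f a b s :
  a <= b -> (forall u, a <= u <= b -> I u) ->
  (forall u, a <= u <= b -> cont_within I f u) ->
  continuity_pt (fun t => f (clamp a b t)) s.
Proof.
  intros Hab HI Hc eps Heps.
  destruct (Hc _ (clamp_mem a b s Hab) eps Heps) as [del [Hdel Hd]].
  exists del. split; [lra |]. intros t [_ Ht]. simpl in *. unfold R_dist in *.
  pose proof (clamp_dist a b t s Hab).
  apply Hd; [apply HI, clamp_mem | ]; lra.
Qed.

Lemma derivable_pt_lim_clamp I f a b s d :
  a < s < b -> (forall u, a < u < b -> I u) ->
  deriv_within I f s d -> derivable_pt_lim (fun t => f (clamp a b t)) s d.
Proof.
  intros Hs HI Hd.
  apply (derivable_pt_lim_locally_ext f _ s a b); [exact Hs | |].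
  - intros u Hu. rewrite clamp_id; lra.
  - exact (deriv_within_derivable_pt_lim I f a b s d Hs HI Hd).
Qed.

Section ClampedWeightedSquares.

Variables (I : R -> Prop) (x z x' z' : R -> R) (k a b : R).

Definition weighted_sq_clamped t :=
  x (clamp a b t) * x (clamp a b t) + k * (z (clamp a b t) * z (clamp a b t)).

Lemma weighted_sq_clamped_id t :
  a <= t <= b -> weighted_sq_clamped t = x t ^ 2 + k * z t ^ 2.
Proof. intros Ht. unfold weighted_sq_clamped. rewrite clamp_id by exact Ht. ring. Qed.

Hypotheses (Hab : a <= b) (HI : forall u, a <= u <= b -> I u)
  (Dx : forall t, a <= t <= b -> deriv_within I x t (x' t))
  (Dz : forall t, a <= t <= b -> deriv_within I z t (z' t)).

Lemma continuity_weighted_sq_clamped : continuity weighted_sq_clamped.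
Proof.
  assert (Cx : forall s, continuity_pt (fun t => x (clamp a b t)) s).
  { intro s. apply (continuity_pt_clamp I); auto.
    intros u Hu. exact (deriv_within_cont I x u _ (Dx u Hu)). }
  assert (Cz : forall s, continuity_pt (fun t => z (clamp a b t)) s).
  { intro s. apply (continuity_pt_clamp I); auto.
    intros u Hu. exact (deriv_within_cont I z u _ (Dz u Hu)). }
  intro s. apply continuity_pt_plus; [| apply continuity_pt_scal];
    apply continuity_pt_mult; auto.
Qed.

Lemma derivable_pt_lim_weighted_sq_clamped t : a < t < b ->
  derivable_pt_lim weighted_sq_clamped t (2 * x t * x' t + k * (2 * z t * z' t)).
Proof.
  intros Ht.
  assert (HIo : forall u, a < u < b -> I u) by (intros; apply HI; lra).
  assert (Htc : a <= t <= b) by lra.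
  pose proof (derivable_pt_lim_clamp I x a b t _ Ht HIo (Dx t Htc)) as HDx.
  pose proof (derivable_pt_lim_clamp I z a b t _ Ht HIo (Dz t Htc)) as HDz.
  pose proof (derivable_pt_lim_plus _ _ _ _ _ (derivable_pt_lim_mult _ _ _ _ _ HDx HDx)
    (derivable_pt_lim_scal _ k _ _ (derivable_pt_lim_mult _ _ _ _ _ HDz HDz))) as HD.
  cbv beta in HD. rewrite !(clamp_id a b t) in HD by exact Htc.
  replace (2 * x t * x' t + k * (2 * z t * z' t))
    with (x' t * x t + x t * x' t + k * (z' t * z t + z t * z' t)) by ring.
  exact HD.
Qed.

End ClampedWeightedSquares.

Lemma continuous_le_before_first_hit F a b y :
  continuity F -> a <= b -> F a <= y -> F b = y ->
  (forall s, a <= s <= b -> F s = y -> b <= s) ->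
  forall t, a <= t <= b -> F t <= y.
Proof.
  intros HF Hab Ha Hb Hfirst t Ht.
  destruct (Rle_or_lt (F t) y) as [Hle | Hgt]; [exact Hle | exfalso].
  destruct (Req_dec t b) as [-> | Hne]; [lra |].
  destruct (IVT_gen F a t y HF) as [s [Hs Hys]].
  - rewrite Rmin_left, Rmax_right by lra. lra.
  - rewrite Rmin_left, Rmax_right in Hs by lra.
    pose proof (Hfirst s ltac:(lra) Hys). lra.
Qed.

Lemma mvt_upper_bound F F' a b M :
  continuity F -> a <= b ->
  (forall t, a < t < b -> derivable_pt_lim F t (F' t)) ->
  (forall t, a <= t <= b -> F' t <= M) ->
  F b - F a <= M * (b - a).
Proof.
  intros HF Hab HD HM.
  destruct (MVT_gen F a b F') as [c [Hc Heq]].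
  - rewrite Rmin_left, Rmax_right by lra.
    intros t Ht. apply is_derive_Reals, HD, Ht.
  - intros t _. apply HF.
  - rewrite Rmin_left, Rmax_right in Hc by lra.
    rewrite Heq. apply Rmult_le_compat_r; [lra | apply HM, Hc].
Qed.

Lemma weighted_sum_sq_le X Z k :
  0 <= k <= 1 -> X ^ 2 + Z ^ 2 <= 1 -> (X ^ 2 + k * Z ^ 2) ^ 2 <= X ^ 2 + k ^ 2 * Z ^ 2.
Proof.
  intros Hk HXZ.
  (* The difference is at least X^2 Z^2 (1 - k)^2. *)
  assert (E : X ^ 2 + k ^ 2 * Z ^ 2 - (X ^ 2 + k * Z ^ 2) ^ 2
            = X ^ 2 * (1 - X ^ 2 - 2 * k * Z ^ 2) + k ^ 2 * Z ^ 2 * (1 - Z ^ 2)) by ring.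
  assert (0 <= X ^ 2 * Z ^ 2 * (1 - k) ^ 2) by (apply Rmult_le_pos; nra).
  assert (X ^ 2 * (1 - X ^ 2 - 2 * k * Z ^ 2) >= X ^ 2 * (Z ^ 2 * (1 - 2 * k))) by nra.
  assert (k ^ 2 * Z ^ 2 * (1 - Z ^ 2) >= k ^ 2 * Z ^ 2 * X ^ 2) by nra.
  nra.
Qed.

Lemma triple_product_le X Yr P xi0 l S :
  X ^ 2 <= xi0 -> Yr ^ 2 <= 1 / 4 -> P ^ 2 <= l ^ 2 / 2 ->
  S ^ 2 = 2 * xi0 -> 0 <= S -> 0 <= l ->
  4 * X * Yr * P <= S * l.
Proof.
  intros HX HYr HP HS HS0 Hl.
  assert (Hsq : (4 * X * Yr * P) ^ 2 <= (S * l) ^ 2).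
  { replace ((4 * X * Yr * P) ^ 2) with (16 * (X ^ 2 * (Yr ^ 2 * P ^ 2))) by ring.
    replace ((S * l) ^ 2) with (16 * (xi0 * (1 / 4 * (l ^ 2 / 2))))
      by (rewrite Rpow_mult_distr, HS; field).
    apply Rmult_le_compat_l; [lra |].
    apply Rmult_le_compat; try nra. }
  destruct (Rle_or_lt (4 * X * Yr * P) (S * l)) as [Hle | Hgt]; [exact Hle |].
  assert (0 <= S * l) by nra. nra.
Qed.

Lemma xi_derivative_le X Yr Yi H Z k c l xi0 S :
  0 <= k <= 1 -> 0 < c -> 0 < l -> 0 < H ->
  X ^ 2 + k * Z ^ 2 <= xi0 -> xi0 <= k ->
  X ^ 2 + 4 * Yr ^ 2 + Z ^ 2 = 1 -> Yr ^ 2 + Yi ^ 2 = l ^ 2 / (2 * H ^ 2) ->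
  S ^ 2 = 2 * xi0 -> 0 <= S ->
  2 * X * ((- X + 4 * c * Yr * Yi + X * (X ^ 2 + k * Z ^ 2)) * H)
  + k * (2 * Z * ((- k + (X ^ 2 + k * Z ^ 2)) * Z * H)) <= 2 * S * c * l.
Proof.
  intros Hk Hc Hl HH Hxi Hxik C1 C2 HS HS0.
  assert (Hdiss := weighted_sum_sq_le X Z k Hk ltac:(nra)).
  assert (HP : (H * Yi) ^ 2 <= l ^ 2 / 2).
  { assert (E : (H * Yi) ^ 2 = l ^ 2 / 2 - H ^ 2 * Yr ^ 2).
    { replace ((H * Yi) ^ 2) with (H ^ 2 * Yi ^ 2) by ring.
      replace (Yi ^ 2) with (l ^ 2 / (2 * H ^ 2) - Yr ^ 2) by lra. field. lra. }
    nra. }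
  assert (Hsrc : 4 * X * Yr * (H * Yi) <= S * l)
    by (apply (triple_product_le X Yr (H * Yi) xi0 l S); nra).
  replace (2 * X * ((- X + 4 * c * Yr * Yi + X * (X ^ 2 + k * Z ^ 2)) * H)
           + k * (2 * Z * ((- k + (X ^ 2 + k * Z ^ 2)) * Z * H)))
    with (2 * c * (4 * X * Yr * (H * Yi))
          + 2 * H * ((X ^ 2 + k * Z ^ 2) ^ 2 - (X ^ 2 + k ^ 2 * Z ^ 2))) by ring.
  nra.
Qed.

Theorem lemma2
  (c l w : R) (I : R -> Prop)
  (x yr yi h z : R -> R)
  (tb xi0 t0 : R)
  (Hc : 0 < c) (Hl : 0 < l) (Hw : -1 <= w <= 1)
  (HI : is_interval I)
  (Cx : C1_on I x) (Cyr : C1_on I yr) (Cyi : C1_on I yi)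
  (Ch : C1_on I h) (Cz : C1_on I z)
  (Hh : forall t, I t -> 0 < h t)
  (Hz : forall t, I t -> 0 <= z t)
  (Dx : forall t, I t -> deriv_within I x t
     ((- x t + 4 * c * yr t * yi t + x t * (x t ^ 2 + (1 + w) / 2 * z t ^ 2)) * h t))
  (Dyr : forall t, I t -> deriv_within I yr t
     (((x t ^ 2 + (1 + w) / 2 * z t ^ 2) * yr t - c * x t * yi t) * h t))
  (Dyi : forall t, I t -> deriv_within I yi t
     (((x t ^ 2 + (1 + w) / 2 * z t ^ 2) * yi t + c * x t * yr t) * h t))
  (Dz : forall t, I t -> deriv_within I z t
     ((- ((1 + w) / 2) + (x t ^ 2 + (1 + w) / 2 * z t ^ 2)) * z t * h t))
  (Dh : forall t, I t -> deriv_within I h t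
     (- (x t ^ 2 + (1 + w) / 2 * z t ^ 2) * h t ^ 2))
  (Hcon1 : forall t, I t -> x t ^ 2 + 4 * yr t ^ 2 + z t ^ 2 = 1)
  (Hcon2 : forall t, I t -> yr t ^ 2 + yi t ^ 2 = l ^ 2 / (2 * h t ^ 2))
  (Htb : I tb)
  (Hxi0 : 0 < xi0)
  (Hxib : x tb ^ 2 + (1 + w) / 2 * z tb ^ 2 <= xi0)
  (Hxi0w : xi0 <= (1 + w) / 2)
  (Ht0I : I t0) (Ht0b : tb <= t0)
  (Ht0xi : x t0 ^ 2 + (1 + w) / 2 * z t0 ^ 2 = xi0)
  (Ht0min : forall t, I t -> tb <= t -> x t ^ 2 + (1 + w) / 2 * z t ^ 2 = xi0 -> t0 <= t) :
  t0 - tb >= 1 / (2 * sqrt (2 * xi0)) * (1 / (c * l))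
             * (xi0 - (x tb ^ 2 + (1 + w) / 2 * z tb ^ 2)).
Proof.
  set (k := (1 + w) / 2) in *.
  assert (Hk : 0 <= k <= 1) by (unfold k; lra).
  assert (HIab : forall u, tb <= u <= t0 -> I u) by (intros u Hu; apply (HI tb u t0); tauto).
  set (xi := weighted_sq_clamped x z k tb t0).
  assert (Hxi : forall t, tb <= t <= t0 -> xi t = x t ^ 2 + k * z t ^ 2)
    by exact (weighted_sq_clamped_id x z k tb t0).
  set (vx := fun t => (- x t + 4 * c * yr t * yi t + x t * (x t ^ 2 + k * z t ^ 2)) * h t).
  set (vz := fun t => (- k + (x t ^ 2 + k * z t ^ 2)) * z t * h t).
  assert (Dx' : forall t, tb <= t <= t0 -> deriv_within I x t (vx t)) by auto.
  assert (Dz' : forall t, tb <= t <= t0 -> deriv_within I z t (vz t)) by auto.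
  assert (Hcont : continuity xi) by exact (continuity_weighted_sq_clamped I x z vx vz k tb t0
    Ht0b HIab Dx' Dz').
  assert (Hbelow : forall t, tb <= t <= t0 -> x t ^ 2 + k * z t ^ 2 <= xi0).
  { intros t Ht. rewrite <- Hxi by exact Ht.
    apply (continuous_le_before_first_hit xi tb t0); auto; try (rewrite Hxi by lra; auto).
    intros s Hs Hys. rewrite Hxi in Hys by exact Hs. apply Ht0min; auto; lra. }
  assert (HS : sqrt (2 * xi0) ^ 2 = 2 * xi0) by (apply pow2_sqrt; lra).
  assert (HS0 : 0 < sqrt (2 * xi0)) by (apply sqrt_lt_R0; lra).
  set (S := sqrt (2 * xi0)) in *.
  assert (Hclimb : xi t0 - xi tb <= 2 * S * c * l * (t0 - tb)).
  { apply (mvt_upper_bound xi (fun t => 2 * x t * vx t + k * (2 * z t * vz t)));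
      [exact Hcont | exact Ht0b | |].
    - exact (derivable_pt_lim_weighted_sq_clamped I x z vx vz k tb t0 HIab Dx' Dz').
    - intros t Ht. assert (It : I t) by auto.
      apply (xi_derivative_le _ _ _ _ _ _ _ _ xi0); auto; lra. }
  rewrite (Hxi t0), (Hxi tb), Ht0xi in Hclimb by lra.
  assert (HM : 0 < 2 * S * c * l) by (apply Rmult_lt_0_compat; [nra | lra]).
  apply Rle_ge.
  replace (1 / (2 * S) * (1 / (c * l)) * (xi0 - (x tb ^ 2 + k * z tb ^ 2)))
    with ((xi0 - (x tb ^ 2 + k * z tb ^ 2)) / (2 * S * c * l)) by (field; lra).
  apply Rle_div_l; lra.
Qed.
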